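(* Let $k\ge2$, $a>0$, $0<\theta<1$, $\lambda=a^k$, and $\gamma(u)=a(1+\theta)-u+\frac{u-a\theta}{1+u^k}$. Then $\gamma$ maps $[a\theta,a]$ into itself and has a unique fixed point $\xi\in(a\theta,a)$. Moreover $\gamma'(\xi)<-1$ holds if and only if $\theta<\frac{k-1}{k+1}$ and $\lambda>\frac{1}{k-1-(k+1)\theta}\bigl(\frac{k+1}{k}\bigr)^k$. *)

From Stdlib Require Import Reals.
Open Scope R_scope.

Definition gamma (k : nat) (a theta : R) (u : R) : R :=
  a * (1 + theta) - u + (u - a * theta) / (1 + u ^ k).

From Stdlib Require Import Reals Lra Lia.
Open Scope R_scope.

(* Clearing denominators, [gamma u = u] becomes [u^k (2u - a(1+theta)) = a - u]. On the
   half-line where the slope [2u - a(1+theta)] is nonnegative the left side minus the right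
   side is strictly increasing, and every fixed point in [(0, a]] lies there; this gives
   existence (intermediate values at [a theta] and [a]) and uniqueness. At the fixed point
   [xi] the identity above simplifies the derivative so that [gamma'(xi) < -1] iff
   [xi < k a / (k + 1)], and by monotonicity this holds iff the polynomial is positive at
   [k a / (k + 1)], which unfolds to the two stated inequalities. *)

Section GammaMap.

Variables (k : nat) (a theta : R).

Definition fix_poly (u : R) : R := u ^ k * (2 * u - a * (1 + theta)) - (a - u).

Lemma gamma_eq_self_iff u : 0 < u -> gamma k a theta u = u <-> fix_poly u = 0.
Proof.
  intros hu. assert (hX : 0 < u ^ k) by (apply pow_lt; lra).
  unfold gamma, fix_poly.
  set (q := (u - a * theta) / (1 + u ^ k)).
  assert (hq : q * (1 + u ^ k) = u - a * theta) by (unfold q; field; lra).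
  split; intros H.
  - assert (q = 2 * u - a * (1 + theta)) by lra. subst q. nra.
  - assert (q = 2 * u - a * (1 + theta)) by (apply Rmult_eq_reg_r with (1 + u ^ k); nra).
    lra.
Qed.

Lemma fix_poly_lt u v :
  0 < u < v -> 0 <= 2 * u - a * (1 + theta) -> fix_poly u < fix_poly v.
Proof.
  intros [hu huv] hc. unfold fix_poly.
  assert (u ^ k <= v ^ k) by (apply pow_incr; lra).
  assert (0 < u ^ k) by (apply pow_lt; lra).
  assert (u ^ k * (2 * u - a * (1 + theta)) <= v ^ k * (2 * v - a * (1 + theta)))
    by (apply Rmult_le_compat; lra).
  lra.
Qed.

Lemma fix_poly_root_slope_ge0 u :
  0 < u <= a -> fix_poly u = 0 -> 0 <= 2 * u - a * (1 + theta).
Proof.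
  intros hu h. assert (0 < u ^ k) by (apply pow_lt; lra). unfold fix_poly in h. nra.
Qed.

Lemma fix_poly_root_slope_gt0 u :
  0 < u < a -> fix_poly u = 0 -> 0 < 2 * u - a * (1 + theta).
Proof.
  intros hu h. assert (0 < u ^ k) by (apply pow_lt; lra). unfold fix_poly in h. nra.
Qed.

Lemma root_lt_iff_fix_poly_pos xi v :
  0 < xi -> fix_poly xi = 0 -> 0 <= 2 * xi - a * (1 + theta) ->
  0 < v -> 0 <= 2 * v - a * (1 + theta) ->
  xi < v <-> 0 < fix_poly v.
Proof.
  intros hxi hroot hcxi hv hcv. split; intros H.
  - rewrite <- hroot. apply fix_poly_lt; lra.
  - destruct (Rlt_le_dec xi v) as [hlt | [hlt | heq]]; [exact hlt | | ].
    + pose proof (fix_poly_lt v xi (conj hv hlt) hcv). lra.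
    + subst v. lra.
Qed.

Lemma fix_poly_root_unique u v : 0 < u -> 0 < v ->
  fix_poly u = 0 -> 0 <= 2 * u - a * (1 + theta) ->
  fix_poly v = 0 -> 0 <= 2 * v - a * (1 + theta) -> u = v.
Proof.
  intros hu hv hru hcu hrv hcv.
  destruct (Rtotal_order u v) as [h | [h | h]]; [ | exact h | ].
  - apply (root_lt_iff_fix_poly_pos u v) in h; lra.
  - apply (root_lt_iff_fix_poly_pos v u) in h; lra.
Qed.

Lemma fix_poly_continuous : continuity fix_poly.
Proof. unfold fix_poly. reg. Qed.

Hypotheses (ha : 0 < a) (ht0 : 0 < theta) (ht1 : theta < 1).

Lemma fix_poly_root_exists : exists xi, a * theta < xi < a /\ fix_poly xi = 0.
Proof.
  assert (hat : 0 < a * theta) by nra.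
  assert (hata : a * theta < a) by nra.
  assert (hlow : fix_poly (a * theta) < 0).
  { unfold fix_poly. assert (0 < (a * theta) ^ k) by (apply pow_lt; lra). nra. }
  assert (hhigh : 0 < fix_poly a).
  { unfold fix_poly. assert (0 < a ^ k) by (apply pow_lt; lra). nra. }
  destruct (IVT fix_poly (a * theta) a fix_poly_continuous hata hlow hhigh)
    as [xi [[h1 h2] hroot]].
  exists xi. split; [ | exact hroot ].
  destruct h1 as [h1 | h1]; [ | subst xi; lra ].
  destruct h2 as [h2 | h2]; [ | subst xi; lra ].
  lra.
Qed.

Lemma gamma_maps_interval u :
  a * theta <= u <= a -> a * theta <= gamma k a theta u <= a.
Proof.
  intros hu. unfold gamma.
  assert (0 < u ^ k) by (apply pow_lt; nra).
  set (q := (u - a * theta) / (1 + u ^ k)).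
  assert (hq : q * (1 + u ^ k) = u - a * theta) by (unfold q; field; lra).
  assert (0 <= q) by (unfold q; apply Rle_mult_inv_pos; lra).
  split; nra.
Qed.

End GammaMap.

Lemma gamma_derivative k a theta x : 1 + x ^ k <> 0 ->
  derivable_pt_lim (gamma k a theta) x
    (-1 + ((1 + x ^ k) - INR k * x ^ pred k * (x - a * theta)) / (1 + x ^ k) ^ 2).
Proof.
  intros hx.
  assert (D := derivable_pt_lim_plus _ _ x _ _
    (derivable_pt_lim_minus _ _ x _ _
       (derivable_pt_lim_const (a * (1 + theta)) x) (derivable_pt_lim_id x))
    (derivable_pt_lim_div _ _ x _ _
       (derivable_pt_lim_minus _ _ x _ _
          (derivable_pt_lim_id x) (derivable_pt_lim_const (a * theta) x))
       (derivable_pt_lim_plus _ _ x _ _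
          (derivable_pt_lim_const 1 x) (derivable_pt_lim_pow x k)) hx)).
  change (gamma k a theta) with
    ((fct_cte (a * (1 + theta)) - id)%F
     + (id - fct_cte (a * theta))%F / (fct_cte 1 + (fun y => y ^ k))%F)%F.
  match type of D with derivable_pt_lim _ _ ?L =>
    match goal with |- derivable_pt_lim _ _ ?G => replace G with L end end.
  - exact D.
  - unfold Rsqr, plus_fct, minus_fct, fct_cte, id; field; exact hx.
Qed.

(* At a fixed point the identity [xi^k c = a - xi], [c = 2 xi - a(1+theta)], turns the
   numerator [N] of [gamma' + 1] into [xi N c = (xi - a theta)(xi - k (a - xi))]. *)
Lemma gamma_derivative_at_fixed_lt_iff k a theta xi :
  (0 < k)%nat -> 0 < a * theta < xi -> xi < a -> fix_poly k a theta xi = 0 ->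
  -1 + ((1 + xi ^ k) - INR k * xi ^ pred k * (xi - a * theta)) / (1 + xi ^ k) ^ 2 < -1
  <-> (INR k + 1) * xi < INR k * a.
Proof.
  intros hk hxi hxa hroot.
  assert (hc : 0 < 2 * xi - a * (1 + theta))
    by (apply (fix_poly_root_slope_gt0 k); lra).
  unfold fix_poly in hroot.
  set (K := INR k) in *. set (P := xi ^ pred k) in *.
  set (c := 2 * xi - a * (1 + theta)) in *.
  assert (hXP : xi ^ k = xi * P) by (unfold P; destruct k; [lia | reflexivity]).
  rewrite hXP in *.
  set (N := 1 + xi * P - K * P * (xi - a * theta)).
  assert (hP : 0 < P) by (unfold P; apply pow_lt; lra).
  assert (hN : xi * N * c = (xi - a * theta) * (xi - K * (a - xi))).
  { transitivity (xi * c + xi * (xi * P * c) - K * (xi * P * c) * (xi - a * theta));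
      [unfold N; ring | ].
    replace (xi * P * c) with (a - xi) by lra. unfold c. ring. }
  assert (hsq : 0 < (1 + xi * P) ^ 2) by (apply pow_lt; nra).
  assert (hxc : 0 < xi * c) by (apply Rmult_lt_0_compat; lra).
  split; intros H.
  - assert (N < 0).
    { apply Rnot_le_lt. intros hN0.
      assert (0 <= N / (1 + xi * P) ^ 2) by (apply Rle_mult_inv_pos; lra). lra. }
    assert (xi * N * c < 0) by nra.
    nra.
  - assert (N < 0) by nra.
    assert (N / (1 + xi * P) ^ 2 < 0) by (apply Rdiv_neg_pos; lra).
    lra.
Qed.

Section Threshold.

Variables (k : nat) (a theta : R).
Hypotheses (hk : (0 < k)%nat) (ha : 0 < a).

Let K := INR k.
Let D := K - 1 - (K + 1) * theta.
Let x0 := K * a / (K + 1).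

Let K_pos : 0 < K.
Proof. apply lt_0_INR; exact hk. Qed.

Lemma threshold_slope : 2 * x0 - a * (1 + theta) = a * D / (K + 1).
Proof. unfold x0, D. field. lra. Qed.

Lemma fix_poly_threshold_pos_iff :
  0 < D -> a ^ k > / D * ((K + 1) / K) ^ k <-> 0 < fix_poly k a theta x0.
Proof.
  intros hD.
  set (r := (K / (K + 1)) ^ k).
  assert (hr : 0 < r) by (apply pow_lt, Rdiv_lt_0_compat; lra).
  assert (hQr : ((K + 1) / K) ^ k = / r).
  { unfold r. rewrite <- pow_inv. f_equal. field. lra. }
  assert (hx0k : x0 ^ k = a ^ k * r).
  { unfold r, x0. rewrite <- Rpow_mult_distr. f_equal. field. lra. }
  assert (hpoly : fix_poly k a theta x0 = a / (K + 1) * (a ^ k * r * D - 1)).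
  { unfold fix_poly. rewrite hx0k, threshold_slope. unfold x0. field. lra. }
  assert (ha1 : 0 < a / (K + 1)) by (apply Rdiv_lt_0_compat; lra).
  assert (hrD : 0 < r * D) by nra.
  rewrite hQr, hpoly. unfold Rgt.
  replace (/ D * / r) with (/ (r * D)) by (field; lra).
  split; intros H.
  - apply Rmult_lt_0_compat; [exact ha1 | ].
    apply (Rmult_lt_compat_r (r * D)) in H; [ | exact hrD ].
    rewrite Rinv_l in H by lra. lra.
  - assert (0 < a ^ k * r * D - 1) by nra.
    apply (Rmult_lt_reg_r (r * D)); [exact hrD | ].
    rewrite Rinv_l by lra. lra.
Qed.

Lemma root_lt_threshold_iff xi :
  0 < a * theta < xi -> xi < a -> fix_poly k a theta xi = 0 ->
  (K + 1) * xi < K * a <->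
  theta < (K - 1) / (K + 1) /\ a ^ k > / D * ((K + 1) / K) ^ k.
Proof.
  intros hxi hxa hroot.
  assert (hcxi : 0 < 2 * xi - a * (1 + theta))
    by (apply (fix_poly_root_slope_gt0 k); lra).
  assert (hlt_x0 : (K + 1) * xi < K * a <-> xi < x0).
  { unfold x0. split; intros H.
    - apply (Rmult_lt_reg_r (K + 1)); [lra | ]. field_simplify; lra.
    - apply (Rmult_lt_compat_r (K + 1)) in H; [ | lra ].
      field_simplify in H; lra. }
  assert (htheta : theta < (K - 1) / (K + 1) <-> 0 < D).
  { unfold D. split; intros H.
    - apply (Rmult_lt_compat_r (K + 1)) in H; [ | lra ].
      field_simplify in H; lra.
    - apply (Rmult_lt_reg_r (K + 1)); [lra | ]. field_simplify; lra. }
  assert (hx0 : 0 < x0) by (unfold x0; apply Rdiv_lt_0_compat; nra).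
  assert (hcompare : 0 < D -> xi < x0 <-> 0 < fix_poly k a theta x0).
  { intros hD. apply root_lt_iff_fix_poly_pos; [lra | exact hroot | lra | exact hx0 | ].
    rewrite threshold_slope. left.
    apply Rdiv_lt_0_compat; [apply Rmult_lt_0_compat | ]; lra. }
  rewrite hlt_x0, htheta.
  split.
  - intros H.
    assert (hD : 0 < D).
    { assert (a * D = (K + 1) * (2 * x0 - a * (1 + theta)))
        by (rewrite threshold_slope; field; lra).
      nra. }
    split; [exact hD | ].
    apply fix_poly_threshold_pos_iff; [exact hD | ].
    apply (hcompare hD), H.
  - intros [hD hpos].
    apply fix_poly_threshold_pos_iff in hpos; [ | exact hD ].
    apply (hcompare hD), hpos.
Qed.

End Threshold.

Theorem mainTheorem9 (k : nat) (a theta : R)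
  (hk : (2 <= k)%nat) (ha : 0 < a) (ht0 : 0 < theta) (ht1 : theta < 1) :
  let lambda := a ^ k in
  (forall u, a * theta <= u <= a ->
     a * theta <= gamma k a theta u <= a) /\
  exists xi,
    (a * theta < xi < a /\ gamma k a theta xi = xi) /\
    (forall u, a * theta <= u <= a -> gamma k a theta u = u -> u = xi) /\
    exists d, derivable_pt_lim (gamma k a theta) xi d /\
      (d < -1 <->
        (theta < (INR k - 1) / (INR k + 1) /\
         lambda > / (INR k - 1 - (INR k + 1) * theta)
                  * ((INR k + 1) / INR k) ^ k)).
Proof.
  intros lambda.
  assert (hat : 0 < a * theta) by nra.
  split; [exact (gamma_maps_interval k a theta ha ht0 ht1) | ].
  destruct (fix_poly_root_exists k a theta ha ht0 ht1) as [xi [hxi hroot]].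
  exists xi. split; [split; [exact hxi | apply gamma_eq_self_iff; lra] | split].
  - intros u hu hfix.
    apply gamma_eq_self_iff in hfix; [ | lra ].
    apply (fix_poly_root_unique k a theta u xi); [lra | lra | exact hfix | | exact hroot | ];
      apply (fix_poly_root_slope_ge0 k); lra.
  - eexists. split.
    + apply gamma_derivative. assert (0 < xi ^ k) by (apply pow_lt; lra). lra.
    + rewrite gamma_derivative_at_fixed_lt_iff; [ | lia | lra | lra | exact hroot ].
      apply root_lt_threshold_iff; [lia | exact ha | lra | lra | exact hroot].
Qed.
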